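(* Let $\sigma$ be any satisfaction function, i.e., any assignment that gives, for every participatory budgeting instance $I=\langle P,c,b\rangle$, a function $\sigma: 2^{P}\to\mathbb{R}_{\geq 0}$ that is inclusion-monotonic ($\sigma(Q)\geq\sigma(Q')$ whenever $Q'\subseteq Q\subseteq P$) and satisfies $\sigma(Q)=0$ if and only if $Q=\emptyset$. Then there exist a participatory budgeting instance $I=\langle P,c,b\rangle$ and a profile $\mathbf{A}=(A_1,\ldots,A_n)$ of approval ballots such that no feasible budget allocation $\pi\subseteq P$ with $c(\pi)\leq b$ satisfies strong extended justified representation for $\sigma$ (Strong-EJR$[\sigma]$).
   Context: A participatory budgeting instance is a triple $I=\langle P,c,b\rangle$ where $P$ is a finite set of projects, $c:P\to\mathbb{R}_{>0}$ is a cost function, and $b\in\mathbb{R}_{>0}$ is the budget limit, with $c(p)\leq b$ for all $p\in P$; for $Q\subseteq P$ write $c(Q)=\sum_{p\in Q}c(p)$. A feasible budget allocation is a set $\pi\subseteq P$ with $c(\pi)\leq b$. There is a set of voters $N=\{1,\ldots,n\}$; an approval ballot of voter $i$ is a function $A_i:P\to\{0,1\}$ ($A_i(p)=1$ means $i$ approves $p$), and a profile is $\mathbf{A}=(A_1,\ldots,A_n)$. For a satisfaction function $\sigma$, the satisfaction of voter $i$ for a set $Q\subseteq P$ is $\sigma_i(Q)=\sigma(\{p\in Q: A_i(p)=1\})$. For $Q\subseteq P$, a non-empty group of voters $S\subseteq N$ is $Q$-cohesive if every voter in $S$ approves every project in $Q$ and $\frac{|S|}{n}\cdot b\geq c(Q)$.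 A feasible budget allocation $\pi$ satisfies Strong-EJR$[\sigma]$ if for every $Q\subseteq P$ and every $Q$-cohesive group $S$, we have $\sigma_i(\pi)\geq\sigma_i(Q)$ for all $i\in S$. *)

From mathcomp Require Import all_boot all_order all_algebra.
Set Implicit Arguments. Unset Strict Implicit. Unset Printing Implicit Defensive.
Import Order.TTheory GRing.Theory Num.Theory.
Local Open Scope ring_scope.

Definition cost (R : realFieldType) (m : nat) (c : 'I_m -> R) (Q : {set 'I_m}) : R :=
  \sum_(p in Q) c p.

Definition pb_instance (R : realFieldType) (m : nat) (c : 'I_m -> R) (b : R) : Prop :=
  0 < b /\ forall p : 'I_m, 0 < c p /\ c p <= b.

Definition satisfaction_function (R : realFieldType)
  (sigma : forall m : nat, ('I_m -> R) -> R -> {set 'I_m} -> R) : Prop :=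
  forall (m : nat) (c : 'I_m -> R) (b : R), pb_instance c b ->
    (forall Q : {set 'I_m}, 0 <= sigma m c b Q) /\
    (forall Q Q' : {set 'I_m}, Q' \subset Q -> sigma m c b Q' <= sigma m c b Q) /\
    (forall Q : {set 'I_m}, sigma m c b Q = 0 <-> Q = set0).

Definition feasible (R : realFieldType) (m : nat) (c : 'I_m -> R) (b : R)
  (pi : {set 'I_m}) : Prop := cost c pi <= b.

(* A i = set of projects approved by voter i *)
Definition cohesive (R : realFieldType) (m n : nat) (c : 'I_m -> R) (b : R)
  (A : 'I_n -> {set 'I_m}) (Q : {set 'I_m}) (S : {set 'I_n}) : Prop :=
  S != set0 /\ (forall i, i \in S -> Q \subset A i) /\
  (#|S|%:R / n%:R) * b >= cost c Q.

(* sigma_i(Q) = sigma({p in Q : A_i(p) = 1}) *)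
Definition strong_EJR (R : realFieldType)
  (sigma : forall m : nat, ('I_m -> R) -> R -> {set 'I_m} -> R)
  (m n : nat) (c : 'I_m -> R) (b : R) (A : 'I_n -> {set 'I_m})
  (pi : {set 'I_m}) : Prop :=
  feasible c b pi /\
  forall (Q : {set 'I_m}) (S : {set 'I_n}), cohesive c b A Q S ->
    forall i, i \in S -> sigma m c b (Q :&: A i) <= sigma m c b (pi :&: A i).

From mathcomp Require Import all_boot all_order all_algebra.
Import Order.TTheory GRing.Theory Num.Theory.
Local Open Scope ring_scope.

(** Take n >= 2 projects of equal cost a, with a budget b < 2a that still
    pays for a project out of the share (n-1)/n of any n-1 voters, and let
    voter i approve every project but the i-th.  A feasible allocation has at
    most one project, say within {i}, so voter i gets nothing from it.  But
    for any q <> i the n-1 voters other than q form a {q}-cohesive group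
    containing i, and i approves q: Strong-EJR would force
    sigma({q}) <= sigma(empty), contradicting sigma(Q) = 0 <-> Q = empty. *)

Lemma cost_cst (R : realFieldType) (m : nat) (a : R) (Q : {set 'I_m}) :
  cost (fun=> a) Q = #|Q|%:R * a.
Proof. by rewrite /cost sumr_const mulr_natl. Qed.

Lemma satisfaction_le_set0 {R : realFieldType}
    {sigma : forall m : nat, ('I_m -> R) -> R -> {set 'I_m} -> R}
    {m : nat} {c : 'I_m -> R} {b : R} {Q : {set 'I_m} } :
  satisfaction_function sigma -> pb_instance c b ->
  sigma m c b Q <= sigma m c b set0 -> Q = set0.
Proof.
move=> sigmaP /sigmaP [ge0 [_ eq0]] le0; apply/eq0.
by apply/le_anti; rewrite ge0 andbT -((eq0 set0).2 erefl).
Qed.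

Lemma card_le1_sub_set1 {T : finType} (x0 : T) (A : {set T}) :
  (#|A| <= 1)%N -> exists x, A \subset [set x].
Proof.
move=> /card_le1P A1; have [->|[x xA]] := set_0Vmem A.
  by exists x0; rewrite sub0set.
by exists x; apply/subsetP => y; rewrite (A1 x xA) inE.
Qed.

Lemma setC1_ord_neq0 {n : nat} (i : 'I_n) : (1 < n)%N -> [set~ i] != set0.
Proof.
by move=> n_gt1; rewrite -card_gt0 cardsC1 card_ord -ltnS prednK // ltnW.
Qed.

Section AllButOne.

Variables (R : realFieldType) (n : nat) (a b : R).
Hypotheses (n_gt1 : (1 < n)%N) (b_lt2a : b < a *+ 2).

Let c : 'I_n -> R := fun=> a.

Lemma feasible_cst_card_le1 (pi : {set 'I_n}) :
  0 < a -> feasible c b pi -> (#|pi| <= 1)%N.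
Proof.
move=> a_gt0; rewrite /feasible /c cost_cst => pi_le_b; rewrite leqNgt; apply/negP.
move=> pi_gt1; have := le_lt_trans pi_le_b b_lt2a.
by rewrite -(mulr_natl a 2) ltr_pM2r // ltr_nat ltnNge pi_gt1.
Qed.

Lemma cohesive_all_but (q : 'I_n) :
  a <= (n.-1)%:R / n%:R * b ->
  cohesive c b (fun i => [set~ i]) [set q] [set~ q].
Proof.
move=> a_le; split; last split.
- exact: setC1_ord_neq0.
- by move=> i; rewrite sub1set !inE eq_sym.
- by rewrite /c cost_cst cards1 mul1r cardsC1 card_ord.
Qed.

Lemma all_but_not_strong_EJR
    (sigma : forall m : nat, ('I_m -> R) -> R -> {set 'I_m} -> R)
    (pi : {set 'I_n}) :
  satisfaction_function sigma -> pb_instance c b ->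
  a <= (n.-1)%:R / n%:R * b ->
  feasible c b pi -> ~ strong_EJR sigma c b (fun i => [set~ i]) pi.
Proof.
move=> sigmaP inst a_le pi_feas [_ EJR].
pose i0 : 'I_n := Ordinal (ltnW n_gt1).
have a_gt0 : 0 < a by case: (inst.2 i0).
have [i pi_sub] := card_le1_sub_set1 i0 _ (feasible_cst_card_le1 _ a_gt0 pi_feas).
have /set0Pn [q] := setC1_ord_neq0 i n_gt1; rewrite !inE => qi.
have pi_Ai_eq0 : pi :&: [set~ i] = set0.
  by apply/eqP; rewrite -setDE setD_eq0.
have := EJR _ _ (cohesive_all_but q a_le) i; rewrite !inE eq_sym qi pi_Ai_eq0.
move=> /(_ isT) /(satisfaction_le_set0 sigmaP inst) /setP /(_ q).
by rewrite !inE eqxx qi.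
Qed.

End AllButOne.

Theorem mainTheorem1 (R : realFieldType)
  (sigma : forall m : nat, ('I_m -> R) -> R -> {set 'I_m} -> R) :
  satisfaction_function sigma ->
  exists (m : nat) (c : 'I_m -> R) (b : R) (n : nat) (A : 'I_n -> {set 'I_m}),
    pb_instance c b /\ (0 < n)%N /\
    forall pi : {set 'I_m}, cost c pi <= b -> ~ strong_EJR sigma c b A pi.
Proof.
move=> sigmaP.
have inst : pb_instance (fun _ : 'I_3 => 2 : R) 3.
  by split=> // p; split; rewrite ?ltr_nat ?ler_nat.
exists 3%N, (fun=> 2), 3, 3%N, (fun i => [set~ i]); split=> //; split=> // pi.
apply: all_but_not_strong_EJR => //.
- by rewrite -mulrnA ltr_nat.
- by rewrite -mulrA mulVf ?mulr1 ?pnatr_eq0.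
Qed.
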